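(* Let $n\ge 4$, let $\pi$ be a real representation of $S_n$, and let $s_1=(1,2)$, $s_3=(3,4)$. Then the integer $h_\pi=\frac{\chi_\pi(1)-\chi_\pi(s_1s_3)}{2}$ is even.
   Context: $\chi_\pi$ denotes the character of $\pi$. *)

From mathcomp Require Import all_boot all_order all_algebra all_fingroup.
From mathcomp Require Import mxrepresentation.
From mathcomp Require Import reals.
Set Implicit Arguments. Unset Strict Implicit. Unset Printing Implicit Defensive.
Import GRing.Theory Num.Theory.
Local Open Scope ring_scope.

Definition mx_char (R : comUnitRingType) (gT : finGroupType) (G : {group gT})
  (d : nat) (rG : mx_representation R G d) (g : gT) : R := \tr (rG g).

From mathcomp Require Import all_boot all_order all_algebra all_fingroup.
From mathcomp Require Import mxrepresentation.
From mathcomp Require Import reals.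
From mathcomp Require Import ring.
Set Implicit Arguments. Unset Strict Implicit. Unset Printing Implicit Defensive.
Import GRing.Theory Num.Theory.
Local Open Scope ring_scope.

(* The two double transpositions s1 and s3 commute and, being conjugate,
   have the same trace; so pi(s1) and pi(s3) are commuting involutions A, B
   with tr A = tr B.  Then chi(1) - chi(s1 s3) = tr((1 + A)(1 - B)), and
   (1 + A)(1 - B) / 4 is the projection onto the joint eigenspace
   {A = 1, B = -1}, so this difference is 4 times the dimension of that
   eigenspace. *)

Lemma mxtrace_idem (F : fieldType) n (P : 'M[F]_n) :
  P *m P = P -> \tr P = (\rank P)%:R.
Proof.
move=> PP; have := mulmx_base P.
move: (row_base_free P) (col_base_full P).
move: (col_base P) (row_base P) => C D freeD fullC defP.
have DC : D *m C = 1%:M.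
  apply: (row_free_inj freeD); apply: (row_full_inj fullC).
  by rewrite mul1mx !mulmxA defP -mulmxA defP PP.
by rewrite -{1}defP mxtrace_mulC DC mxtrace1.
Qed.

Lemma comm_mx_idem_mul (R : comPzRingType) n (P Q : 'M[R]_n) :
  P *m P = P -> Q *m Q = Q -> comm_mx P Q -> (P *m Q) *m (P *m Q) = P *m Q.
Proof.
by move=> PP QQ PQ; rewrite mulmxA -(mulmxA P) -PQ mulmxA PP -mulmxA QQ.
Qed.

Section InvolutionProjection.

Variables (F : fieldType) (n : nat).
Hypothesis two_neq0 : (2%:R : F) != 0.
Implicit Types A B : 'M[F]_n.

Definition fixed_proj A := 2%:R^-1 *: (1%:M + A).

Lemma fixed_proj_idem A : A *m A = 1%:M -> fixed_proj A *m fixed_proj A = fixed_proj A.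
Proof.
move=> AA; have sqr : (1%:M + A) *m (1%:M + A) = 2%:R *: (1%:M + A).
  by rewrite scaler_nat mulr2n mulmxDl mul1mx mulmxDr mulmx1 AA (addrC A).
rewrite /fixed_proj -scalemxAl -scalemxAr sqr !scalerA.
by congr (_ *: _); field.
Qed.

Lemma comm_fixed_proj A B : comm_mx A B -> comm_mx (fixed_proj A) (fixed_proj B).
Proof.
move=> AB; have AB1 : comm_mx (1%:M + A) (1%:M + B).
  apply: comm_mxD; first exact: comm_mx1.
  by apply: comm_mx_sym; apply: comm_mxD; [exact: comm_mx1 | exact: comm_mx_sym].
by rewrite /comm_mx /fixed_proj -!scalemxAl -!scalemxAr AB1.
Qed.

Lemma mxtrace_sub_mul_invol A B :
    A *m A = 1%:M -> B *m B = 1%:M -> comm_mx A B -> \tr A = \tr B ->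
  \tr (1%:M : 'M_n) - \tr (A *m B) =
    4%:R * (\rank (fixed_proj A *m fixed_proj (- B)))%:R.
Proof.
move=> AA BB AB trAB.
have BB' : - B *m - B = 1%:M by rewrite mulNmx mulmxN opprK.
rewrite -mxtrace_idem; last first.
  by apply: comm_mx_idem_mul; rewrite ?fixed_proj_idem //; apply/comm_fixed_proj/comm_mxN.
rewrite /fixed_proj -scalemxAl -scalemxAr !mxtraceZ.
rewrite mulmxDl mul1mx !mulmxDr !mulmx1 !mxtraceD mulmxN !raddfN /= trAB.
by field.
Qed.

End InvolutionProjection.

Section DisjointTranspositions.

Variables (T : finType) (a b c e : T).
Hypotheses (ab : a != b) (ac : a != c) (ae : a != e)
           (bc : b != c) (be : b != e) (ce : c != e).

Lemma commute_tperm_disjoint : commute (tperm a b) (tperm c e).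
Proof.
apply/commgP/conjg_fixP; rewrite tpermJ.
by rewrite !tpermD // eq_sym.
Qed.

Lemma tpermJ_disjoint : (tperm a b ^ (tperm a c * tperm b e))%g = tperm c e.
Proof.
rewrite tpermJ !permM tpermL (tpermD ab) 1?eq_sym // tpermL.
by rewrite tpermD // eq_sym.
Qed.

End DisjointTranspositions.

Section ReprTrace.

Variables (R : comUnitRingType) (gT : finGroupType) (G : {group gT}) (d : nat).
Variable rG : mx_representation R G d.

Lemma repr_mx_invol x : x \in G -> (x * x = 1)%g -> rG x *m rG x = 1%:M.
Proof. by move=> Gx xx; rewrite -repr_mxM // xx repr_mx1. Qed.

Lemma mxtrace_repr_conjg x y : x \in G -> y \in G -> \tr (rG (x ^ y)%g) = \tr (rG x).
Proof.
move=> Gx Gy; rewrite conjgE !repr_mxM ?groupM ?groupV //.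
by rewrite mxtrace_mulC -mulmxA -repr_mxM ?groupV // mulgV repr_mx1 mulmx1.
Qed.

End ReprTrace.

Theorem lemma3p2 (R : realType) (n : nat) (hn : (4 <= n)%N)
  (i1 i2 i3 i4 : 'I_n)
  (h1 : nat_of_ord i1 = 0%N) (h2 : nat_of_ord i2 = 1%N)
  (h3 : nat_of_ord i3 = 2%N) (h4 : nat_of_ord i4 = 3%N)
  (d : nat) (pi : mx_representation R [set: 'S_n]%G d) :
  let s1 : 'S_n := tperm i1 i2 in
  let s3 : 'S_n := tperm i3 i4 in
  exists k : int,
    (mx_char pi 1%g - mx_char pi (s1 * s3)%g) / 2%:R = (2 * k)%:~R.
Proof.
move=> s1 s3.
have [i12 i13 i14] : [/\ i1 != i2, i1 != i3 & i1 != i4].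
  by rewrite -!val_eqE /= h1 h2 h3 h4.
have [i23 i24 i34] : [/\ i2 != i3, i2 != i4 & i3 != i4].
  by rewrite -!val_eqE /= h2 h3 h4.
have s1s1 : pi s1 *m pi s1 = 1%:M by rewrite repr_mx_invol ?tperm2.
have s3s3 : pi s3 *m pi s3 = 1%:M by rewrite repr_mx_invol ?tperm2.
have s1s3 : comm_mx (pi s1) (pi s3).
  by rewrite /comm_mx -!repr_mxM // commute_tperm_disjoint.
have tr_s1s3 : \tr (pi s1) = \tr (pi s3).
  by rewrite /s3 -(tpermJ_disjoint i12 i23 i34) mxtrace_repr_conjg.
exists (\rank (fixed_proj (pi s1) *m fixed_proj (- pi s3)))%:Z.
have two_neq0 : (2%:R : R) != 0 by rewrite pnatr_eq0.
rewrite /mx_char repr_mxM // repr_mx1 mxtrace_sub_mul_invol //.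
by rewrite intrM; field.
Qed.
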